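(* For integers $n\ge 0$ and $k\ge 1$, $$\mathfrak C_{2n}^{(k)}=(-4)^n(n!)^2\int_0^1\cdots\int_0^1\binom{\frac{x_1x_2\cdots x_k}{2}}{n}\binom{-\frac{x_1x_2\cdots x_k}{2}}{n}\,dx_1\,dx_2\cdots dx_k,$$ where the integral is $k$-fold.
   Context: For an integer $k$, ${\rm Lif}_{2,k}(z)=\sum_{m=0}^\infty\frac{z^{2m}}{(2m)!(2m+1)^k}$, and the poly-Cauchy numbers with level $2$, $\mathfrak C_n^{(k)}$, are defined by ${\rm Lif}_{2,k}({\rm arcsinh}\,t)=\sum_{n=0}^\infty\mathfrak C_n^{(k)}\frac{t^n}{n!}$. For real $y$, $\binom{y}{n}=\frac{y(y-1)\cdots(y-n+1)}{n!}$. *)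

From Stdlib Require Import Reals Lra Lia ZArith List.
From Coquelicot Require Import Coquelicot.
Open Scope R_scope.

Definition Lif2 (k : Z) (z : R) : R :=
  Series (fun m : nat => z ^ (2 * m) / (INR (fact (2 * m)) * powerRZ (INR (2 * m + 1)) k)).

(* Poly-Cauchy numbers with level 2: Lif_{2,k}(arcsinh t) = sum_n C_n t^n / n!,
   i.e. C_n is the n-th derivative at t = 0 of t |-> Lif_{2,k}(arcsinh t). *)
Definition polyCauchy2 (k : Z) (n : nat) : R :=
  Derive_n (fun t => Lif2 k (arcsinh t)) n 0.

Fixpoint falling (y : R) (n : nat) : R :=
  match n with
  | O => 1
  | S m => falling y m * (y - INR m)
  end.
Definition gbinom (y : R) (n : nat) : R := falling y n / INR (fact n).

Fixpoint cube_int (k : nat) (F : list R -> R) : R :=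
  match k with
  | O => F nil
  | S k' => RInt (fun x => cube_int k' (fun l => F (x :: l))) 0 1
  end.

Definition prodR (l : list R) : R := fold_right Rmult 1 l.

From Stdlib Require Import Reals ZArith List Lra Lia.
From Coquelicot Require Import Coquelicot.
Open Scope R_scope.

(* Let F_m(t) = arcsinh(t)^(2m) / (2m)!.  Under t = sinh u the operator
   (1 + t^2) d^2/dt^2 + t d/dt becomes d^2/du^2, so
   (1 + t^2) F_m'' + t F_m' = F_(m-1): the Taylor coefficients c_m(j) of F_m
   obey a two-term recursion in j, are bounded by 1 and vanish for j < m.
   Summing Lif_(2,k)(arcsinh t) = sum_m F_m(t) / (2m+1)^k column by column
   gives C_(2n)^(k) = (2n)! sum_m c_m(2n) / (2m+1)^k.  The same recursion at
   j = 2n shows (-4)^n (n!)^2 binom(x/2, n) binom(-x/2, n)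
   = prod_(i<n) (x^2 - 4 i^2) = sum_m (2n)! c_m(2n) x^(2m), and the integral
   of (x_1 ... x_k)^(2m) over the unit cube is 1 / (2m+1)^k. *)

Lemma cube_int_ext k (F G : list R -> R) :
  (forall xs, F xs = G xs) -> cube_int k F = cube_int k G.
Proof.
  revert F G; induction k as [|k IH]; intros F G HFG; simpl; [apply HFG|].
  apply RInt_ext; intros x _; apply IH; intros xs; apply HFG.
Qed.

Lemma is_RInt_sum_pow (a : nat -> R) (d : nat -> nat) N :
  is_RInt (fun x => sum_f_R0 (fun m => a m * x ^ d m) N) 0 1
    (sum_f_R0 (fun m => a m / INR (S (d m))) N).
Proof.
  assert (Hmono : forall m, is_RInt (fun x => a m * x ^ d m) 0 1 (a m / INR (S (d m)))).
  { intros m.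
    replace (a m / INR (S (d m)))
      with (scal (a m) (1 ^ S (d m) / INR (S (d m)) - 0 ^ S (d m) / INR (S (d m)))).
    - apply (is_RInt_scal (fun x => x ^ d m)), is_RInt_pow.
    - rewrite pow1, pow_i by lia; unfold scal; simpl; unfold mult; simpl.
      unfold Rdiv; ring. }
  induction N as [|N IH]; [apply Hmono|].
  exact (is_RInt_plus _ _ _ _ _ _ IH (Hmono (S N))).
Qed.

Lemma cube_int_sum_pow_prod k : forall (a : nat -> R) (d : nat -> nat) N,
  cube_int k (fun xs => sum_f_R0 (fun m => a m * prodR xs ^ d m) N) =
  sum_f_R0 (fun m => a m / INR (S (d m)) ^ k) N.
Proof.
  induction k as [|k IH]; intros a d N; cbn [cube_int].
  - apply sum_eq; intros m _; change (prodR nil) with 1; rewrite pow1; simpl; field.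
  - assert (Hd : forall m, INR (S (d m)) <> 0) by (intros; apply not_0_INR; lia).
    rewrite (RInt_ext _ (fun x => sum_f_R0 (fun m => a m / INR (S (d m)) ^ k * x ^ d m) N)).
    + rewrite (is_RInt_unique _ _ _ _ (is_RInt_sum_pow _ _ _)).
      apply sum_eq; intros m _; simpl; field; split; [apply pow_nonzero|]; apply Hd.
    + intros x _.
      rewrite (cube_int_ext k _ (fun xs => sum_f_R0 (fun m => a m * x ^ d m * prodR xs ^ d m) N)).
      * rewrite IH; apply sum_eq; intros m _; field; apply pow_nonzero, Hd.
      * intros xs; apply sum_eq; intros m _; change (prodR (x :: xs)) with (x * prodR xs).
        rewrite Rpow_mult_distr; ring.
Qed.

Lemma CV_radius_le_abs (a b : nat -> R) :
  (forall n, Rabs (a n) <= Rabs (b n)) -> Rbar_le (CV_radius b) (CV_radius a).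
Proof.
  intros Hab; unfold CV_radius.
  apply (proj2 (Lub_Rbar_correct (CV_disk b))); intros x Hx.
  apply (proj1 (Lub_Rbar_correct (CV_disk a))).
  apply (@ex_series_le R_AbsRing R_CompleteNormedModule _ (fun n => Rabs (b n * x ^ n)));
    [intros n | exact Hx].
  change (norm (Rabs (a n * x ^ n))) with (Rabs (Rabs (a n * x ^ n))).
  rewrite Rabs_Rabsolu, !Rabs_mult.
  apply Rmult_le_compat_r; [apply Rabs_pos | apply Hab].
Qed.

Lemma CV_radius_const_1 : Rbar_le 1 (CV_radius (fun _ => 1)).
Proof.
  apply (proj1 (CV_radius_bounded _)); exists 1; intros n.
  rewrite pow1, Rmult_1_l, Rabs_R1; lra.
Qed.

Lemma CV_radius_succ : Rbar_le 1 (CV_radius (fun n => INR (S n))).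
Proof.
  rewrite (CV_radius_ext _ (PS_derive (fun _ => 1)))
    by (intros n; unfold PS_derive; rewrite Rmult_1_r; f_equal; lia).
  rewrite CV_radius_derive; exact CV_radius_const_1.
Qed.

Lemma Series_tail_le (f : nat -> R) r M : 0 <= r < 1 ->
  (forall j, Rabs (f j) <= r ^ j) -> Rabs (Series f - sum_f_R0 f M) <= r ^ S M / (1 - r).
Proof.
  intros Hr Hf.
  assert (Hr1 : Rabs r < 1) by (rewrite Rabs_pos_eq; lra).
  assert (Hgeom : ex_series (fun j => r ^ S M * r ^ j))
    by exact (@ex_series_scal_l R_AbsRing R_NormedModule _ _ (ex_series_geom _ Hr1)).
  assert (Htail : forall j, Rabs (f (S M + j)%nat) <= r ^ S M * r ^ j)
    by (intros j; rewrite <- pow_add; apply Hf).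
  assert (Hex_abs : ex_series (fun j => Rabs (f (S M + j)%nat))).
  { apply (@ex_series_le R_AbsRing R_CompleteNormedModule _ (fun j => r ^ S M * r ^ j));
      [intros j | exact Hgeom].
    change (norm (Rabs (f (S M + j)%nat))) with (Rabs (Rabs (f (S M + j)%nat))).
    rewrite Rabs_Rabsolu; apply Htail. }
  assert (Hex : ex_series f).
  { apply ex_series_Rabs.
    apply (@ex_series_le R_AbsRing R_CompleteNormedModule _ (fun j => r ^ j));
      [intros j | exact (ex_series_geom _ Hr1)].
    change (norm (Rabs (f j))) with (Rabs (Rabs (f j))); rewrite Rabs_Rabsolu; apply Hf. }
  rewrite (Series_incr_n f (S M)) by (lia || exact Hex); simpl pred.
  replace (sum_f_R0 f M + Series (fun j => f (S M + j)%nat) - sum_f_R0 f M)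
    with (Series (fun j => f (S M + j)%nat)) by ring.
  eapply Rle_trans; [apply Series_Rabs, Hex_abs|].
  eapply Rle_trans; [apply (Series_le _ _ (fun j => conj (Rabs_pos _) (Htail j)) Hgeom)|].
  rewrite Series_scal_l, Series_geom by exact Hr1; right; field; lra.
Qed.

Lemma sum_f_R0_swap_triangular (u : nat -> nat -> R) M :
  (forall m j, (j < m)%nat -> u m j = 0) ->
  sum_f_R0 (fun m => sum_f_R0 (u m) M) M = sum_f_R0 (fun j => sum_f_R0 (fun m => u m j) j) M.
Proof.
  intros Hu; induction M as [|M IH]; [reflexivity|].
  assert (Hlast : sum_f_R0 (u (S M)) M = 0) by (apply sum_eq_R0; intros; apply Hu; lia).
  simpl sum_f_R0 at 1; rewrite plus_sum, IH; simpl sum_f_R0; rewrite Hlast; ring.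
Qed.

Section TriangularSeries.

Variables (u : nat -> nat -> R) (r : R).
Hypothesis r_range : 0 <= r < 1.
Hypothesis u_triangular : forall m j, (j < m)%nat -> u m j = 0.
Hypothesis u_bound : forall m j, Rabs (u m j) <= r ^ j.

Let diag (j : nat) : R := sum_f_R0 (fun m => u m j) j.

Lemma ex_series_Rabs_succ_pow : ex_series (fun j => Rabs (INR (S j) * r ^ j)).
Proof.
  apply CV_disk_inside; eapply Rbar_lt_le_trans; [|exact CV_radius_succ].
  simpl; rewrite Rabs_pos_eq; lra.
Qed.

Lemma Rabs_diag_le j : Rabs (diag j) <= INR (S j) * r ^ j.
Proof.
  eapply Rle_trans; [apply sum_f_R0_triangle|].
  rewrite Rmult_comm, <- sum_cte; apply sum_Rle; intros m _; apply u_bound.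
Qed.

Lemma partial_sums_diag_le M :
  Rabs (sum_f_R0 (fun m => Series (u m)) M - sum_f_R0 diag M)
  <= r / (1 - r) * (INR (S M) * r ^ M).
Proof.
  unfold diag; rewrite <- sum_f_R0_swap_triangular by exact u_triangular.
  rewrite <- minus_sum.
  eapply Rle_trans; [apply sum_f_R0_triangle|].
  eapply Rle_trans.
  { apply (sum_Rle _ (fun _ => r ^ S M / (1 - r))); intros m _.
    apply Series_tail_le; [exact r_range | apply u_bound]. }
  rewrite sum_cte; simpl pow; right; field; lra.
Qed.

Lemma is_series_triangular :
  is_series (fun m => Series (u m)) (Series (fun j => sum_f_R0 (fun m => u m j) j)).
Proof.
  fold diag.
  assert (Hdiag : is_lim_seq (sum_n diag) (Series diag)).
  { apply Series_correct.
    apply (@ex_series_le R_AbsRing R_CompleteNormedModule _ (fun j => Rabs (INR (S j) * r ^ j)));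
      [intros j | exact ex_series_Rabs_succ_pow].
    eapply Rle_trans; [apply Rabs_diag_le | apply Rle_abs]. }
  assert (Hw : is_lim_seq (fun M => r / (1 - r) * (INR (S M) * r ^ M)) 0).
  { replace (Finite 0) with (Rbar_mult (r / (1 - r)) 0) by (simpl; f_equal; ring).
    apply is_lim_seq_scal_l, is_lim_seq_abs_0, ex_series_lim_0, ex_series_Rabs_succ_pow. }
  assert (Hdiff : is_lim_seq
      (fun M => sum_f_R0 (fun m => Series (u m)) M - sum_f_R0 diag M) 0).
  { apply (is_lim_seq_le_le (fun M => - (r / (1 - r) * (INR (S M) * r ^ M))) _ _ _
             (fun M => proj1 (Rabs_le_between _ _) (partial_sums_diag_le M))); [|exact Hw].
    replace (Finite 0) with (Rbar_opp 0) by (simpl; f_equal; ring).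
    apply -> is_lim_seq_opp; exact Hw. }
  assert (Hsum := is_lim_seq_plus' _ _ _ _ Hdiag Hdiff); rewrite Rplus_0_r in Hsum.
  apply (is_lim_seq_ext _ (sum_n (fun m => Series (u m)))) in Hsum; [exact Hsum|].
  intros M; rewrite !sum_n_Reals; ring.
Qed.

End TriangularSeries.

Lemma cosh_sqr u : cosh u * cosh u = 1 + sinh u ^ 2.
Proof. unfold cosh, sinh; rewrite exp_Ropp; pose proof (exp_pos u); field; lra. Qed.

Lemma is_derive_PSeries_sinh (a : nat -> R) u :
  Rbar_lt (Rabs (sinh u)) (CV_radius a) ->
  is_derive (fun u => PSeries a (sinh u)) u (PSeries (PS_derive a) (sinh u) * cosh u).
Proof.
  intros Hrad; rewrite Rmult_comm.
  apply (is_derive_comp (PSeries a) sinh); [apply is_derive_PSeries, Hrad|].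
  apply is_derive_Reals, derivable_pt_lim_sinh.
Qed.

Lemma is_derive_PSeries_derive_sinh_cosh (a : nat -> R) u :
  Rbar_lt (Rabs (sinh u)) (CV_radius a) ->
  is_derive (fun u => PSeries (PS_derive a) (sinh u) * cosh u) u
    ((1 + sinh u ^ 2) * PSeries (PS_derive (PS_derive a)) (sinh u)
     + sinh u * PSeries (PS_derive a) (sinh u)).
Proof.
  intros Hrad.
  rewrite <- CV_radius_derive in Hrad.
  assert (Hcosh : is_derive cosh u (sinh u))
    by apply is_derive_Reals, derivable_pt_lim_cosh.
  assert (H := is_derive_mult _ _ u _ _ (is_derive_PSeries_sinh _ u Hrad) Hcosh Rmult_comm).
  rewrite <- cosh_sqr.
  unfold plus, mult in H; simpl in H.
  replace (cosh u * cosh u * PSeries (PS_derive (PS_derive a)) (sinh u)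
           + sinh u * PSeries (PS_derive a) (sinh u))
    with (PSeries (PS_derive (PS_derive a)) (sinh u) * cosh u * cosh u
          + PSeries (PS_derive a) (sinh u) * sinh u) by ring.
  exact H.
Qed.

Lemma is_derive_pow_div_fact n u :
  is_derive (fun u => u ^ S n / INR (fact (S n))) u (u ^ n / INR (fact n)).
Proof.
  assert (Hfact : 0 < INR (fact n)) by apply lt_0_INR, lt_O_fact.
  assert (HS : 0 < INR (S n)) by (apply lt_0_INR; lia).
  apply is_derive_Reals.
  replace (u ^ n / INR (fact n)) with (INR (S n) * u ^ pred (S n) / INR (fact (S n)))
    by (rewrite fact_simpl, mult_INR; simpl pred; field; lra).
  apply (derivable_pt_lim_div_scal (fun u => u ^ S n)), derivable_pt_lim_pow.
Qed.

Lemma is_derive_0_const (f : R -> R) lo hi :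
  (forall x, lo < x < hi -> is_derive f x 0) ->
  forall x y, lo < x < hi -> lo < y < hi -> f x = f y.
Proof.
  intros Hf x y Hx Hy.
  destruct (MVT_abs f (fun _ => 0) x y) as [c [Hc _]].
  - intros c Hc; apply is_derive_Reals, Hf; split.
    + apply Rlt_le_trans with (Rmin x y); [apply Rmin_glb_lt|]; lra.
    + apply Rle_lt_trans with (Rmax x y); [|apply Rmax_lub_lt]; lra.
  - rewrite Rabs_R0, Rmult_0_l in Hc.
    apply Rabs_eq_0 in Hc; lra.
Qed.

Lemma Rabs_sinh_lt_1 u : arcsinh (-1) < u < arcsinh 1 -> Rabs (sinh u) < 1.
Proof.
  intros [Hlo Hhi]; apply sinh_lt in Hlo, Hhi.
  rewrite sinh_arcsinh in Hlo, Hhi; apply Rabs_def1; lra.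
Qed.

(* The coefficient of t^j in arcsinh(t)^(2m) / (2m)!, see [PSeries_asinh_coef]. *)
Fixpoint asinh_coef (m j : nat) {struct j} : R :=
  match j with
  | O => match m with O => 1 | S _ => 0 end
  | S O => 0
  | S (S i) =>
      (match m with O => 0 | S m' => asinh_coef m' i end - INR i ^ 2 * asinh_coef m i)
      / (INR (S i) * INR (S (S i)))
  end.

Definition asinh_coef_prev (m j : nat) : R :=
  match m with O => 0 | S m' => asinh_coef m' j end.

Lemma asinh_coef_SS m i :
  asinh_coef m (S (S i)) =
  (asinh_coef_prev m i - INR i ^ 2 * asinh_coef m i) / (INR (S i) * INR (S (S i))).
Proof. reflexivity. Qed.

Lemma asinh_coef_0_S j : asinh_coef 0 (S j) = 0.
Proof.
  induction j as [j IH] using Wf_nat.lt_wf_ind.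
  destruct j as [|[|i]]; [reflexivity | |].
  - rewrite asinh_coef_SS; unfold asinh_coef_prev; simpl INR; unfold Rdiv; ring.
  - rewrite asinh_coef_SS, (IH i) by lia; unfold asinh_coef_prev, Rdiv; ring.
Qed.

Lemma asinh_coef_lt m j : (j < m)%nat -> asinh_coef m j = 0.
Proof.
  revert m; induction j as [j IH] using Wf_nat.lt_wf_ind; intros m Hjm.
  destruct j as [|[|i]]; [destruct m; [lia | reflexivity] | reflexivity |].
  destruct m as [|m]; [lia|].
  rewrite asinh_coef_SS; unfold asinh_coef_prev.
  rewrite !IH by lia; unfold Rdiv; ring.
Qed.

Lemma asinh_coef_bound m j : Rabs (asinh_coef m j) <= 1.
Proof.
  revert m; induction j as [j IH] using Wf_nat.lt_wf_ind; intros m.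
  destruct j as [|[|i]].
  - destruct m; simpl; rewrite ?Rabs_R1, ?Rabs_R0; lra.
  - simpl; rewrite Rabs_R0; lra.
  - assert (Hprev : Rabs (asinh_coef_prev m i) <= 1)
      by (destruct m; simpl; [rewrite Rabs_R0; lra | apply IH; lia]).
    assert (Hcur := IH i ltac:(lia) m).
    assert (Hi := pos_INR i).
    assert (Hden : 0 < INR (S i) * INR (S (S i))) by (rewrite !S_INR; nra).
    rewrite asinh_coef_SS; unfold Rdiv.
    rewrite Rabs_mult, Rabs_inv, (Rabs_pos_eq (_ * _)) by lra.
    apply (Rmult_le_reg_r (INR (S i) * INR (S (S i)))); [exact Hden|].
    rewrite Rmult_assoc, Rinv_l, Rmult_1_r, Rmult_1_l by lra.
    (* |p - i^2 c| <= 1 + i^2 <= (i+1)(i+2) *)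
    eapply Rle_trans; [apply Rabs_triang|].
    rewrite Rabs_Ropp, Rabs_mult, (Rabs_pos_eq (INR i ^ 2)) by nra.
    rewrite !S_INR; nra.
Qed.

Lemma CV_radius_asinh_coef m : Rbar_le 1 (CV_radius (asinh_coef m)).
Proof.
  eapply Rbar_le_trans; [exact CV_radius_const_1|].
  apply CV_radius_le_abs; intros j; rewrite Rabs_R1; apply asinh_coef_bound.
Qed.

Lemma asinh_coef_ode m t : Rabs t < 1 ->
  (1 + t ^ 2) * PSeries (PS_derive (PS_derive (asinh_coef m))) t
  + t * PSeries (PS_derive (asinh_coef m)) t = PSeries (asinh_coef_prev m) t.
Proof.
  intros Ht.
  set (a := asinh_coef m).
  assert (Hrad : Rbar_lt (Rabs t) (CV_radius a))
    by (apply Rbar_lt_le_trans with 1; [exact Ht | apply CV_radius_asinh_coef]).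
  assert (E1 : ex_pseries (PS_derive a) t) by (apply ex_pseries_derive; exact Hrad).
  assert (E2 : ex_pseries (PS_derive (PS_derive a)) t)
    by (apply ex_pseries_derive; rewrite CV_radius_derive; exact Hrad).
  set (D1 := PS_derive a) in *; set (D2 := PS_derive D1) in *.
  replace ((1 + t ^ 2) * PSeries D2 t + t * PSeries D1 t)
    with (PSeries D2 t + PSeries (PS_incr_n D2 2) t + PSeries (PS_incr_1 D1) t)
    by (rewrite PSeries_incr_n, PSeries_incr_1; ring).
  rewrite <- PSeries_plus by (try apply ex_pseries_incr_n; assumption).
  rewrite <- PSeries_plus
    by (try apply ex_pseries_plus; try apply ex_pseries_incr_n;
        try apply ex_pseries_incr_1; assumption).
  apply PSeries_ext; intros j.
  unfold PS_plus, PS_incr_n, PS_incr_1, D2, D1, PS_derive, a, plus, zero.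
  destruct j as [|[|j]]; cbn -[asinh_coef INR]; rewrite asinh_coef_SS.
  - simpl INR; field.
  - change (asinh_coef m 1) with 0; simpl INR; field.
  - rewrite !S_INR; pose proof (pos_INR j); field; lra.
Qed.

Lemma PSeries_asinh_coef_0 x : Rabs x < 1 -> PSeries (asinh_coef 0) x = 1.
Proof.
  intros Hx.
  rewrite PSeries_decr_1
    by (apply CV_radius_inside, Rbar_lt_le_trans with 1; [exact Hx | apply CV_radius_asinh_coef]).
  rewrite (PSeries_ext _ (fun _ => 0)) by (intros j; apply asinh_coef_0_S).
  rewrite PSeries_const_0; simpl; ring.
Qed.

Lemma PSeries_asinh_coef_sinh m u : arcsinh (-1) < u < arcsinh 1 ->
  PSeries (asinh_coef m) (sinh u) = u ^ (2 * m) / INR (fact (2 * m)).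
Proof.
  assert (H0 : arcsinh (-1) < 0 < arcsinh 1)
    by (rewrite <- arcsinh_0; split; apply arcsinh_lt; lra).
  assert (Hrad : forall k u, arcsinh (-1) < u < arcsinh 1 ->
                   Rbar_lt (Rabs (sinh u)) (CV_radius (asinh_coef k)))
    by (intros k v Hv; apply Rbar_lt_le_trans with 1;
        [apply Rabs_sinh_lt_1, Hv | apply CV_radius_asinh_coef]).
  revert u; induction m as [|m IH]; intros u Hu.
  - rewrite PSeries_asinh_coef_0 by (apply Rabs_sinh_lt_1, Hu); simpl; field.
  - set (a := asinh_coef (S m)).
    (* [w1] is the derivative of [w] below; by the ODE and the induction
       hypothesis its own derivative vanishes. *)
    set (w1 := fun u => PSeries (PS_derive a) (sinh u) * cosh u
                        - u ^ S (2 * m) / INR (fact (S (2 * m)))).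
    assert (Hw1 : forall v, arcsinh (-1) < v < arcsinh 1 -> w1 v = 0).
    { intros v Hv; transitivity (w1 0).
      - apply (is_derive_0_const w1 (arcsinh (-1)) (arcsinh 1)); [|exact Hv | exact H0].
        intros x Hx.
        replace 0 with (minus ((1 + sinh x ^ 2) * PSeries (PS_derive (PS_derive a)) (sinh x)
                               + sinh x * PSeries (PS_derive a) (sinh x))
                              (x ^ (2 * m) / INR (fact (2 * m)))).
        + exact (is_derive_minus _ _ _ _ _
            (is_derive_PSeries_derive_sinh_cosh _ _ (Hrad _ _ Hx)) (is_derive_pow_div_fact _ _)).
        + unfold a; rewrite asinh_coef_ode by (apply Rabs_sinh_lt_1, Hx).
          rewrite <- IH by exact Hx; apply (minus_eq_zero (G := R_AbelianGroup)).
      - unfold w1, a; rewrite sinh_0, cosh_0, PSeries_0, pow_i by lia.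
        unfold PS_derive; simpl; unfold Rdiv; ring. }
    set (w := fun u => PSeries a (sinh u) - u ^ S (S (2 * m)) / INR (fact (S (S (2 * m))))).
    assert (Hw : w u = w 0).
    { apply (is_derive_0_const w (arcsinh (-1)) (arcsinh 1)); [|exact Hu | exact H0].
      intros x Hx; rewrite <- (Hw1 x Hx).
      exact (is_derive_minus _ _ _ _ _
        (is_derive_PSeries_sinh _ _ (Hrad (S m) _ Hx)) (is_derive_pow_div_fact (S (2 * m)) _)). }
    unfold w, a in Hw; rewrite sinh_0, PSeries_0, pow_i in Hw by lia.
    replace (2 * S m)%nat with (S (S (2 * m))) by lia.
    change (asinh_coef (S m) 0) with 0 in Hw; unfold a, Rdiv in *; lra.
Qed.

Lemma PSeries_asinh_coef m t : Rabs t < 1 ->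
  PSeries (asinh_coef m) t = arcsinh t ^ (2 * m) / INR (fact (2 * m)).
Proof.
  intros Ht; apply Rabs_def2 in Ht.
  rewrite <- (sinh_arcsinh t) at 1; apply PSeries_asinh_coef_sinh.
  split; apply arcsinh_lt; lra.
Qed.

Lemma falling_mul_falling_opp n y N : (2 * n <= N)%nat ->
  (-4) ^ n * (falling y n * falling (- y) n) =
  sum_f_R0 (fun m => INR (fact (2 * n)) * asinh_coef m (2 * n) * (2 * y) ^ (2 * m)) N.
Proof.
  revert N; induction n as [|n IH]; intros N HN.
  - destruct N as [|N]; [simpl; ring|].
    rewrite decomp_sum, sum_eq_R0 by (lia || (intros; rewrite asinh_coef_lt by lia; ring)).
    simpl; ring.
  - destruct N as [|N]; [lia|].
    set (z := (2 * y) ^ 2).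
    assert (Hterm : forall m,
      INR (fact (2 * S n)) * asinh_coef m (2 * S n) * (2 * y) ^ (2 * m) =
      INR (fact (2 * n)) * asinh_coef_prev m (2 * n) * (2 * y) ^ (2 * m)
      - INR (fact (2 * n)) * asinh_coef m (2 * n) * (2 * y) ^ (2 * m) * (4 * INR n ^ 2)).
    { intros m. replace (2 * S n)%nat with (S (S (2 * n))) by lia.
      rewrite asinh_coef_SS, (fact_simpl (S _)), (fact_simpl (2 * n)), !mult_INR.
      assert (0 < INR (S (2 * n))) by (apply lt_0_INR; lia).
      assert (0 < INR (S (S (2 * n)))) by (apply lt_0_INR; lia).
      simpl (INR 2). field; lra. }
    assert (Hshift :
      sum_f_R0 (fun m => INR (fact (2 * n)) * asinh_coef_prev m (2 * n) * (2 * y) ^ (2 * m)) (S N) =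
      z * sum_f_R0 (fun m => INR (fact (2 * n)) * asinh_coef m (2 * n) * (2 * y) ^ (2 * m)) N).
    { rewrite decomp_sum by lia; simpl pred; rewrite scal_sum.
      unfold asinh_coef_prev at 1; rewrite Rmult_0_r, Rmult_0_l, Rplus_0_l.
      apply sum_eq; intros m _; unfold z; replace (2 * S m)%nat with (2 * m + 2)%nat by lia.
      rewrite pow_add; change (asinh_coef_prev (S m) (2 * n)) with (asinh_coef m (2 * n)); ring. }
    rewrite (sum_eq _ _ _ (fun m _ => Hterm m)), minus_sum, Hshift, <- scal_sum.
    rewrite <- !IH by lia; unfold z; simpl falling; simpl pow; ring.
Qed.

Lemma gbinom_half_mul_opp n x :
  (-4) ^ n * INR (fact n) ^ 2 * (gbinom (x / 2) n * gbinom (- (x / 2)) n) =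
  sum_f_R0 (fun m => INR (fact (2 * n)) * asinh_coef m (2 * n) * x ^ (2 * m)) (2 * n).
Proof.
  assert (Hfact := INR_fact_neq_0 n).
  transitivity ((-4) ^ n * (falling (x / 2) n * falling (- (x / 2)) n)).
  { unfold gbinom; field; exact Hfact. }
  rewrite (falling_mul_falling_opp n (x / 2) (2 * n)) by lia.
  apply sum_eq; intros m _; do 2 f_equal; field.
Qed.

Definition lif_coef (k j : nat) : R :=
  sum_f_R0 (fun m => asinh_coef m j / INR (S (2 * m)) ^ k) j.

Lemma Rabs_asinh_coef_div_le k m j : Rabs (asinh_coef m j / INR (S (2 * m)) ^ k) <= 1.
Proof.
  assert (Hpow : 1 <= INR (S (2 * m)) ^ k)
    by (apply pow_R1_Rle; rewrite S_INR; pose proof (pos_INR (2 * m)); lra).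
  unfold Rdiv; rewrite Rabs_mult, Rabs_inv, (Rabs_pos_eq (_ ^ k)) by lra.
  rewrite <- (Rmult_1_r 1); apply Rmult_le_compat; try apply Rabs_pos.
  - apply Rlt_le, Rinv_0_lt_compat; lra.
  - apply asinh_coef_bound.
  - rewrite <- Rinv_1; apply Rinv_le_contravar; lra.
Qed.

Lemma CV_radius_lif_coef k : Rbar_le 1 (CV_radius (lif_coef k)).
Proof.
  eapply Rbar_le_trans; [exact CV_radius_succ|].
  apply CV_radius_le_abs; intros j.
  rewrite (Rabs_pos_eq (INR (S j))) by apply pos_INR.
  eapply Rle_trans; [apply sum_f_R0_triangle|].
  rewrite <- (Rmult_1_l (INR (S j))), <- sum_cte.
  apply sum_Rle; intros m _; apply Rabs_asinh_coef_div_le.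
Qed.

Lemma Lif2_arcsinh k t : Rabs t < 1 ->
  Lif2 (Z.of_nat k) (arcsinh t) = PSeries (lif_coef k) t.
Proof.
  intros Ht.
  set (u := fun m j => asinh_coef m j / INR (S (2 * m)) ^ k * t ^ j).
  assert (Hu : is_series (fun m => Series (u m))
                 (Series (fun j => sum_f_R0 (fun m => u m j) j))).
  { apply (is_series_triangular u (Rabs t)).
    - split; [apply Rabs_pos | exact Ht].
    - intros m j Hjm; unfold u; rewrite asinh_coef_lt by exact Hjm; unfold Rdiv; ring.
    - intros m j; unfold u; rewrite Rabs_mult, <- RPow_abs.
      apply Rle_trans with (1 * Rabs t ^ j); [|lra].
      apply Rmult_le_compat_r; [apply pow_le, Rabs_pos | apply Rabs_asinh_coef_div_le]. }
  unfold Lif2; rewrite (Series_ext _ (fun m => Series (u m))).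
  - rewrite (is_series_unique _ _ Hu); apply Series_ext; intros j.
    unfold u, lif_coef; rewrite <- scal_sum; ring.
  - intros m; unfold u.
    rewrite (Series_ext _ (fun j => / INR (S (2 * m)) ^ k * (asinh_coef m j * t ^ j)))
      by (intros j; unfold Rdiv; ring).
    rewrite Series_scal_l; change (Series _) with (PSeries (asinh_coef m) t).
    rewrite PSeries_asinh_coef by exact Ht.
    rewrite <- pow_powerRZ, Nat.add_1_r.
    assert (0 < INR (fact (2 * m))) by apply lt_0_INR, lt_O_fact.
    assert (0 < INR (S (2 * m))) by (apply lt_0_INR; lia).
    field; split; try apply pow_nonzero; lra.
Qed.

Theorem corollary1 (n k : nat) (hk : (1 <= k)%nat) :
  polyCauchy2 (Z.of_nat k) (2 * n) =
  (-4) ^ n * (INR (fact n)) ^ 2 *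
  cube_int k (fun xs => gbinom (prodR xs / 2) n * gbinom (- (prodR xs / 2)) n).
Proof.
  (* The identity also holds for k = 0. *)
  set (C := (-4) ^ n * INR (fact n) ^ 2).
  assert (HC : C <> 0)
    by (apply Rmult_integral_contrapositive; split; apply pow_nonzero;
        [lra | apply INR_fact_neq_0]).
  unfold polyCauchy2.
  rewrite (Derive_n_ext_loc _ (PSeries (lif_coef k))).
  2: { exists (mkposreal 1 Rlt_0_1); intros t Ht; apply Lif2_arcsinh.
       change (Rabs (t - 0) < 1) in Ht; rewrite Rminus_0_r in Ht; exact Ht. }
  rewrite Derive_n_coef
    by (apply Rbar_lt_le_trans with 1; [simpl; lra | apply CV_radius_lif_coef]).
  rewrite (cube_int_ext k _ (fun xs => sum_f_R0 (fun m =>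
      INR (fact (2 * n)) * asinh_coef m (2 * n) / C * prodR xs ^ (2 * m)) (2 * n))).
  2: { intros xs; apply (Rmult_eq_reg_l C); [|exact HC].
       unfold C; rewrite gbinom_half_mul_opp; fold C.
       rewrite scal_sum; apply sum_eq; intros m _; field; exact HC. }
  rewrite cube_int_sum_pow_prod; unfold lif_coef.
  rewrite Rmult_comm, !scal_sum; apply sum_eq; intros m _.
  field; split; [exact HC | apply pow_nonzero, not_0_INR; lia].
Qed.
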